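(* With the definitions in the context: $\mathcal{P}^{TOBL}\subsetneq\mathcal{P}^{ATOBL}_{2\leftarrow3}$ and $\mathcal{P}^{TOBL}\subsetneq\mathcal{P}^{ATOBL}_{2\rightarrow3}$. More specifically, the correlation $P^G$ belongs to $\mathcal{P}^{ATOBL}_{2\leftarrow3}$ but not to $\mathcal{P}^{ATOBL}_{2\rightarrow3}$, and the correlation $\tilde P^G$ defined by $\tilde p^G(o_1o_2o_3|i_1i_2i_3)=p^G(o_1o_3o_2|i_1i_3i_2)$ (roles of parties 2 and 3 interchanged) belongs to $\mathcal{P}^{ATOBL}_{2\rightarrow3}$ but not to $\mathcal{P}^{ATOBL}_{2\leftarrow3}$.
   Context: Three parties; party $k\in\{1,2,3\}$ has input $i_k\in\{0,1\}$ and output $o_k\in\{0,1\}$; a tripartite correlation is a family of conditional distributions $p(o_1o_2o_3|i_1i_2i_3)$. A bipartite conditional distribution $q(o_2o_3|i_2i_3)$ is of type $2\leftarrow3$ if $\sum_{o_2}q(o_2o_3|i_2i_3)$ does not depend on $i_2$ (no signaling from 2 to 3), and of type $2\rightarrow3$ if $\sum_{o_3}q(o_2o_3|i_2i_3)$ does not depend on $i_3$ (no signaling from 3 to 2). $\mathcal{P}^{ATOBL}_{2\leftarrow3}$ (resp. $\mathcal{P}^{ATOBL}_{2\rightarrow3}$) is the set of tripartite correlations that can be written as $p(o_1o_2o_3|i_1i_2i_3)=\int p(\lambda)\,p(o_1|i_1,\lambda)\,q_\lambda(o_2o_3|i_2i_3)\,d\lambda$ for some probability distribution $p(\lambda)$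 over a hidden variable $\lambda$, single-party conditional distributions $p(o_1|i_1,\lambda)$, and bipartite conditional distributions $q_\lambda$ each of type $2\leftarrow3$ (resp. each of type $2\rightarrow3$). The set of time-ordered bilocal correlations is $\mathcal{P}^{TOBL}=\mathcal{P}^{ATOBL}_{2\leftarrow3}\cap\mathcal{P}^{ATOBL}_{2\rightarrow3}$. Let $a^{\pm}=\frac14(1\pm\frac1{\sqrt2})$ and let $P^G$ be the correlation with matrix (rows $(i_1i_2i_3)$, columns $(o_1o_2o_3)$, both in lexicographic order $000,\dots,111$) $$P^G=\frac12\begin{pmatrix} 2a^+&2a^-&0&0&0&0&2a^-&2a^+\\ 2a^+&2a^-&0&0&0&0&2a^-&2a^+\\ a^+&a^-&a^+&a^-&a^-&a^+&a^-&a^+\\ a^+&a^-&a^+&a^-&a^-&a^+&a^-&a^+\\ a^+&a^-&a^-&a^+&a^+&a^-&a^-&a^+\\ a^+&a^-&a^-&a^+&a^+&a^-&a^-&a^+\\ a^+&a^-&a^-&a^+&a^-&a^+&a^+&a^-\\ a^-&a^+&a^+&a^-&a^+&a^-&a^-&a^+ \end{pmatrix}.$$ *)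

From HB Require Import structures.
From mathcomp Require Import all_boot all_order all_algebra.
From mathcomp Require Import all_classical all_reals all_analysis.
Set Implicit Arguments. Unset Strict Implicit. Unset Printing Implicit Defensive.
Import Order.TTheory GRing.Theory Num.Theory.
Local Open Scope ring_scope.

Section Defs.
Variable R : realType.

(* A tripartite correlation: p o1 o2 o3 i1 i2 i3 = p(o1 o2 o3 | i1 i2 i3),
   bits encoded as bool (false = 0, true = 1). *)
Definition corr := bool -> bool -> bool -> bool -> bool -> bool -> R.

Definition cond1 (f : bool -> bool -> R) : Prop :=
  (forall o i, 0 <= f o i) /\ (forall i, f false i + f true i = 1).

Definition cond2 (q : bool -> bool -> bool -> bool -> R) : Prop :=
  (forall o2 o3 i2 i3, 0 <= q o2 o3 i2 i3) /\
  (forall i2 i3, q false false i2 i3 + q false true i2 i3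
                 + q true false i2 i3 + q true true i2 i3 = 1).

Definition type_2from3 (q : bool -> bool -> bool -> bool -> R) : Prop :=
  forall o3 i2 i2' i3,
    q false o3 i2 i3 + q true o3 i2 i3 = q false o3 i2' i3 + q true o3 i2' i3.

Definition type_2to3 (q : bool -> bool -> bool -> bool -> R) : Prop :=
  forall o2 i2 i3 i3',
    q o2 false i2 i3 + q o2 true i2 i3 = q o2 false i2 i3' + q o2 true i2 i3'.

Definition ATOBL (typ : (bool -> bool -> bool -> bool -> R) -> Prop) (p : corr)
  : Prop :=
  exists (d : measure_display) (T : measurableType d) (P : probability T R)
         (A : T -> bool -> bool -> R) (Q : T -> bool -> bool -> bool -> bool -> R),
    (forall l, cond1 (A l)) /\
    (forall l, cond2 (Q l) /\ typ (Q l)) /\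
    (forall o1 i1, measurable_fun setT (fun l => A l o1 i1)) /\
    (forall o2 o3 i2 i3, measurable_fun setT (fun l => Q l o2 o3 i2 i3)) /\
    (forall o1 o2 o3 i1 i2 i3,
        (p o1 o2 o3 i1 i2 i3)%:E =
        (\int[P]_l (A l o1 i1 * Q l o2 o3 i2 i3)%:E)%E).

Definition ATOBL_2from3 := ATOBL type_2from3.
Definition ATOBL_2to3 := ATOBL type_2to3.
Definition TOBL (p : corr) : Prop := ATOBL_2from3 p /\ ATOBL_2to3 p.

Definition aplus : R := (1 + 1 / Num.sqrt 2) / 4.
Definition aminus : R := (1 - 1 / Num.sqrt 2) / 4.

Definition idx3 (b1 b2 b3 : bool) : nat := 4 * b1 + 2 * b2 + b3.

(* rows (i1 i2 i3), columns (o1 o2 o3), lexicographic; before the factor 1/2 *)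
Definition PG_rows : seq (seq R) :=
  let ap := aplus in let am := aminus in
  [:: [:: 2*ap; 2*am; 0; 0; 0; 0; 2*am; 2*ap];
      [:: 2*ap; 2*am; 0; 0; 0; 0; 2*am; 2*ap];
      [:: ap; am; ap; am; am; ap; am; ap];
      [:: ap; am; ap; am; am; ap; am; ap];
      [:: ap; am; am; ap; ap; am; am; ap];
      [:: ap; am; am; ap; ap; am; am; ap];
      [:: ap; am; am; ap; am; ap; ap; am];
      [:: am; ap; ap; am; ap; am; am; ap] ].

Definition PG : corr := fun o1 o2 o3 i1 i2 i3 =>
  (1 / 2) * nth 0 (nth [::] PG_rows (idx3 i1 i2 i3)) (idx3 o1 o2 o3).

Definition PGtilde : corr := fun o1 o2 o3 i1 i2 i3 => PG o1 o3 o2 i1 i3 i2.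

End Defs.

From HB Require Import structures.
From mathcomp Require Import all_boot all_order all_algebra.
From mathcomp Require Import all_classical all_reals all_analysis.
From mathcomp Require Import measurable_realfun ring lra.
Set Implicit Arguments. Unset Strict Implicit. Unset Printing Implicit Defensive.
Import Order.TTheory GRing.Theory Num.Theory.
Local Open Scope ring_scope.

(* The inclusions TOBL ⊆ ATOBL_{2<-3}, ATOBL_{2->3} hold by
   definition; strictness is witnessed by P^G and its 2<->3 mirror image.
   - Membership P^G ∈ ATOBL_{2<-3}: an explicit model with a hidden variable
     λ = (x, y) uniform on {0,1}^2 (encoded as k < 4 in nat): party 1 answers
     x or y according to i1, party 3 outputs a noisy copy of x, and party 2
     outputs x ⊕ i2 (x ⊕ y ⊕ i3), which may depend on i3 but not conversely.
   - Exclusion P^G ∉ ATOBL_{2->3}: a CHSH-type functional [bell] (inputs i2 = 1)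
     is at most 3 on every product a ⊗ q with q of type 2->3 (first for
     deterministic a, then for all a since local responses are mixtures of
     deterministic ones).  Being linear and positive, [bell] commutes with the
     integral over λ, so the bound 3 persists on ATOBL_{2->3}, while
     bell(P^G) = 8 a^+ = 2 + √2 > 3.
   - Exchanging parties 2 and 3 maps ATOBL_{2<-3} into ATOBL_{2->3}, which
     transports both facts to the mirrored correlation P̃^G. *)

Section Bell.
Variable R : realType.

Definition prodc (a : bool -> bool -> R) (q : bool -> bool -> bool -> bool -> R)
  : corr R := fun o1 o2 o3 i1 i2 i3 => a o1 i1 * q o2 o3 i2 i3.

Definition winning_o1 (i1 i3 o2 o3 : bool) : bool :=
  if i1 then o2 (+) o3 (+) i3 else o3.

Definition bell (p : corr R) : R :=
  \sum_(i1 : bool) \sum_(i3 : bool) \sum_(o2 : bool) \sum_(o3 : bool)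
     p (winning_o1 i1 i3 o2 o3) o2 o3 i1 true i3.

Definition deterministic (x y : bool) (o i : bool) : R :=
  (o == if i then y else x)%:R.

Lemma cond1_mixture (a : bool -> bool -> R) : cond1 a ->
  forall o i, a o i =
    \sum_(xy : bool * bool) a xy.1 false * a xy.2 true * deterministic xy.1 xy.2 o i.
Proof.
move=> [_ a1] o i.
rewrite -(pair_bigA _ (fun x y => a x false * a y true * deterministic x y o i)) /=.
rewrite !big_bool /deterministic.
have := a1 false; have := a1 true.
by case: o; case: i => /= h1 h0; nra.
Qed.

Lemma bell_mixture (I : finType) (w : I -> R) (p : corr R) (f : I -> corr R) :
  (forall o1 o2 o3 i1 i2 i3,
     p o1 o2 o3 i1 i2 i3 = \sum_(k : I) w k * f k o1 o2 o3 i1 i2 i3) ->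
  bell p = \sum_(k : I) w k * bell (f k).
Proof.
move=> hp; rewrite /bell !big_bool !hp -!big_split /=.
by apply: eq_bigr => k _; rewrite !big_bool /=; ring.
Qed.

(* The Bell inequality for a deterministic party 1 and a 2->3 pair: the four
   winning probabilities add up to at most 3, because the distribution of o2
   does not depend on i3. *)
Lemma bell_deterministic (x y : bool) (q : bool -> bool -> bool -> bool -> R) :
  cond2 q -> type_2to3 q -> bell (prodc (deterministic x y) q) <= 3.
Proof.
move=> [q0 q1] ns.
have := q1 true false; have := q1 true true.
have := ns false true false true; have := ns true true false true.
have := q0 false false true false; have := q0 false true true false.
have := q0 true false true false; have := q0 true true true false.
have := q0 false false true true; have := q0 false true true true.
have := q0 true false true true; have := q0 true true true true.
rewrite /bell /prodc /deterministic !big_bool.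
case: x; case: y => /=; rewrite ?mul1r ?mul0r ?add0r ?addr0.
all: lra.
Qed.

Lemma bell_product_le (a : bool -> bool -> R) (q : bool -> bool -> bool -> bool -> R) :
  cond1 a -> cond2 q -> type_2to3 q -> bell (prodc a q) <= 3.
Proof.
move=> ha hq ns; pose w (xy : bool * bool) := a xy.1 false * a xy.2 true.
have w_ge0 xy : 0 <= w xy by apply: mulr_ge0; apply: ha.1.
have w_sum1 : \sum_(xy : bool * bool) w xy = 1.
  rewrite -(pair_bigA _ (fun x y => a x false * a y true)) !big_bool /=.
  transitivity ((a false false + a true false) * (a false true + a true true)).
    by ring.
  by rewrite !ha.2 mulr1.
rewrite (@bell_mixture _ w _ (fun xy => prodc (deterministic xy.1 xy.2) q)).
  apply: (@le_trans _ _ (\sum_xy w xy * 3)); last by rewrite -mulr_suml w_sum1 mul1r.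
  by apply: ler_sum => xy _; rewrite ler_wpM2l //; exact: bell_deterministic.
move=> o1 o2 o3 i1 i2 i3; rewrite /prodc (cond1_mixture ha) mulr_suml.
by apply: eq_bigr => xy _; rewrite /w; ring.
Qed.

End Bell.

Section BellIntegral.
Context (R : realType) d (T : measurableType d) (mu : {measure set T -> \bar R}).

Lemma integral_sum_bool (F : bool -> T -> R) :
  (forall b, measurable_fun setT (F b)) -> (forall b l, 0 <= F b l) ->
  (\int[mu]_l (\sum_(b : bool) F b l)%:E = \sum_(b : bool) \int[mu]_l (F b l)%:E)%E.
Proof.
move=> mF F0; under eq_integral do rewrite -sumEFin.
apply: ge0_integral_sum => // [b|b l _]; last by rewrite lee_fin.
exact/measurable_EFinP.
Qed.

Lemma bell_integral (p : corr R) (g : T -> corr R) :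
  (forall o1 o2 o3 i1 i2 i3, measurable_fun setT (fun l => g l o1 o2 o3 i1 i2 i3)) ->
  (forall l o1 o2 o3 i1 i2 i3, 0 <= g l o1 o2 o3 i1 i2 i3) ->
  (forall o1 o2 o3 i1 i2 i3,
     (p o1 o2 o3 i1 i2 i3)%:E = \int[mu]_l (g l o1 o2 o3 i1 i2 i3)%:E)%E ->
  (bell p)%:E = (\int[mu]_l (bell (g l))%:E)%E.
Proof.
move=> mg g0 hp; rewrite /bell.
rewrite -sumEFin integral_sum_bool => [|i1|i1 l]; first apply: eq_bigr => i1 _.
- rewrite -sumEFin integral_sum_bool => [|i3|i3 l]; first apply: eq_bigr => i3 _.
  + rewrite -sumEFin integral_sum_bool => [|o2|o2 l]; first apply: eq_bigr => o2 _.
    * rewrite -sumEFin integral_sum_bool //; apply: eq_bigr => o3 _; exact: hp.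
    * by apply: measurable_sum => o3.
    * by apply: sumr_ge0 => o3 _.
  + by do 2 apply: measurable_sum => ?.
  + by do 2 (apply: sumr_ge0 => ? _).
- by do 3 apply: measurable_sum => ?.
- by do 3 (apply: sumr_ge0 => ? _).
Qed.

End BellIntegral.

Lemma ATOBL_bell_le (R : realType) (typ : (bool -> bool -> bool -> bool -> R) -> Prop)
    (c : R) (p : corr R) :
  (forall a q, cond1 a -> cond2 q -> typ q -> bell (prodc a q) <= c) ->
  ATOBL typ p -> bell p <= c.
Proof.
move=> hc [d [T [P [A [Q [hA [hQ [mA [mQ hp]]]]]]]]].
have mg o1 o2 o3 i1 i2 i3 :
    measurable_fun setT (fun l => prodc (A l) (Q l) o1 o2 o3 i1 i2 i3).
  exact: measurable_funM.
have g0 l o1 o2 o3 i1 i2 i3 : 0 <= prodc (A l) (Q l) o1 o2 o3 i1 i2 i3.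
  by apply: mulr_ge0; [apply: (hA l).1 | apply: (hQ l).1.1].
have bell_le l : bell (prodc (A l) (Q l)) <= c.
  by apply: hc; [exact: hA | exact: (hQ l).1 | exact: (hQ l).2].
rewrite -lee_fin (bell_integral mg g0 hp).
apply: (@le_trans _ _ (\int[P]_(l in setT) (cst c%:E) l)%E).
  apply: ge0_le_integral => //.
  - by move=> l _; rewrite lee_fin; do 4 (apply: sumr_ge0 => ? _).
  - by apply/measurable_EFinP; do 4 apply: measurable_sum => ?.
  - by move=> l _; rewrite /= lee_fin.
rewrite integral_cst // [X in (_ * X <= _)%E](_ : _ = 1%E) ?mule1 //.
exact: probability_setT.
Qed.

Section UniformNat.
Variables (R : realType) (n : nat).

Definition dirac_nat (k : nat) : {measure set nat -> \bar R} := \d_k.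
Definition unif_weight : {nonneg R} := (n.+1%:R^-1)%:nng.
Local Notation unif := (mscale unif_weight (msum dirac_nat n.+1)).

Lemma unif_setT : unif setT = 1%E.
Proof.
have dirac1 k : dirac_nat k setT = 1%E by rewrite /dirac_nat /= diracT.
rewrite /mscale /= /msum.
under eq_bigr do rewrite dirac1.
rewrite sumEFin -EFinM big_const_ord iter_addr addr0 mulr_natr.
by rewrite -mulr_natr mulVf.
Qed.

HB.instance Definition _ := Measure_isProbability.Build _ _ R unif unif_setT.

Lemma integral_unif (f : nat -> \bar R) : (forall k, 0 <= f k)%E ->
  (\int[unif]_k f k = n.+1%:R^-1%:E * \sum_(k < n.+1) f k)%E.
Proof.
move=> f0.
rewrite ge0_integral_mscale // ge0_integral_measure_sum //.
by under eq_bigr do rewrite /dirac_nat integral_dirac // diracT mul1e.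
Qed.

End UniformNat.

Notation unif_nat R n := (mscale (unif_weight R n) (msum (@dirac_nat R) n.+1)).

(* Every function on nat is measurable (nat carries the discrete σ-algebra). *)
Lemma measurable_fun_nat d (U : measurableType d) (f : nat -> U) :
  measurable_fun [set: nat] f.
Proof. by move=> _ B _. Qed.

(* 1/√2 lies strictly between 1/2 and 1; this is all the arithmetic of a^± used. *)
Lemma inv_sqrt2_bounds (R : rcfType) : 1 / 2 < 1 / Num.sqrt (2 : R) < 1.
Proof.
have s_ge0 : 0 <= Num.sqrt 2 :> R by exact: sqrtr_ge0.
have s_sq : Num.sqrt 2 * Num.sqrt 2 = 2 :> R by rewrite -expr2 sqr_sqrtr ?ler0n.
have s_gt1 : 1 < Num.sqrt 2 :> R by nra.
have s_lt2 : Num.sqrt 2 < 2 :> R by nra.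
have s_gt0 : 0 < Num.sqrt 2 :> R by lra.
by rewrite ltr_pdivlMr // ltr_pdivrMr // !mul1r s_gt1 andbT; lra.
Qed.

Section PG.
Variable R : realType.

Lemma aplus_aminus : aplus R + aminus R = 1 / 2.
Proof. rewrite /aplus /aminus; lra. Qed.

Lemma aplus_ge0 : 0 <= aplus R.
Proof. rewrite /aplus; have := inv_sqrt2_bounds R; lra. Qed.

Lemma aminus_ge0 : 0 <= aminus R.
Proof. rewrite /aminus; have := inv_sqrt2_bounds R; lra. Qed.

(* Every winning probability of P^G equals 2 a^+. *)
Lemma bell_PG : bell (@PG R) = 8 * aplus R.
Proof. by rewrite /bell !big_bool /PG /=; lra. Qed.

Lemma bell_PG_gt3 : 3 < bell (@PG R).
Proof. rewrite bell_PG /aplus; have := inv_sqrt2_bounds R; lra. Qed.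

(* The hidden variable k < 4 encodes the two bits (x, y). *)
Definition hidden_x (k : nat) : bool := odd k.
Definition hidden_y (k : nat) : bool := odd k./2.

Definition alice (k : nat) : bool -> bool -> R :=
  @deterministic R (hidden_x k) (hidden_y k).

(* o3 = x with probability 2 a^+ = cos²(π/8). *)
Definition noisy_copy (x o3 : bool) : R :=
  if o3 == x then 2 * aplus R else 2 * aminus R.

(* Party 3 sends a noisy copy of x; party 2 may read i3. *)
Definition bob_charlie (k : nat) (o2 o3 i2 i3 : bool) : R :=
  noisy_copy (hidden_x k) o3 *
  (o2 == if i2 then hidden_x k (+) hidden_y k (+) i3 else hidden_x k)%:R.

Lemma alice_cond1 k : cond1 (alice k).
Proof.
rewrite /alice /deterministic; split => [out inp | inp]; first by case: (_ == _).
by case: inp; [case: (hidden_y k) | case: (hidden_x k)]; rewrite /=; lra.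
Qed.

Lemma bob_charlie_cond2 k : cond2 (bob_charlie k).
Proof.
have := aplus_ge0; have := aminus_ge0; have := aplus_aminus.
rewrite /bob_charlie /noisy_copy; split => [x2 x3 j2 j3 | j2 j3].
  by apply: mulr_ge0; case: ifP => _ //; lra.
by case: (hidden_x k); case: (if j2 then _ else _) => /=; lra.
Qed.

(* The distribution of o3 ignores the inputs, so no signaling from 2 to 3. *)
Lemma bob_charlie_2from3 k : type_2from3 (bob_charlie k).
Proof.
move=> o3 i2 i2' i3; rewrite /bob_charlie.
by case: (if i2 then _ else _); case: (if i2' then _ else _);
  rewrite /= ?mulr1 ?mulr0 ?addr0 ?add0r.
Qed.

Lemma PG_in_ATOBL_2from3 : ATOBL_2from3 (@PG R).
Proof.
exists _, nat, (unif_nat R 3), alice, bob_charlie.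
split; first exact: alice_cond1.
split; first by move=> k; split; [exact: bob_charlie_cond2 | exact: bob_charlie_2from3].
split; first by move=> *; exact: measurable_fun_nat.
split; first by move=> *; exact: measurable_fun_nat.
move=> o1 o2 o3 i1 i2 i3; rewrite integral_unif => [|k]; last first.
  rewrite lee_fin; apply: mulr_ge0; [exact: (alice_cond1 k).1 | exact: (bob_charlie_cond2 k).1].
rewrite sumEFin -EFinM; congr EFin.
rewrite !big_ord_recr big_ord0 /= /PG /alice /deterministic /bob_charlie /noisy_copy /=.
by case: o1; case: o2; case: o3; case: i1; case: i2; case: i3; rewrite /=; lra.
Qed.

Lemma PG_notin_ATOBL_2to3 : ~ ATOBL_2to3 (@PG R).
Proof.
move=> hPG; have := bell_PG_gt3; apply/negP; rewrite -leNgt.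
exact: (ATOBL_bell_le (@bell_product_le R) hPG).
Qed.

End PG.

Section Swap.
Variable R : realType.

Definition swap23 (p : corr R) : corr R :=
  fun o1 o2 o3 i1 i2 i3 => p o1 o3 o2 i1 i3 i2.

Definition swapq (q : bool -> bool -> bool -> bool -> R) :
  bool -> bool -> bool -> bool -> R := fun o2 o3 i2 i3 => q o3 o2 i3 i2.

Lemma cond2_swapq q : cond2 q -> cond2 (swapq q).
Proof.
move=> [q0 q1]; split => [x2 x3 j2 j3 | j2 j3]; first exact: q0.
by have := q1 j3 j2; rewrite /swapq; lra.
Qed.

Lemma type_2from3_swapq q : type_2from3 q -> type_2to3 (swapq q).
Proof. by move=> h o2 i2 i3 i3'; exact: h. Qed.

Lemma ATOBL_2from3_swap p : ATOBL_2from3 p -> ATOBL_2to3 (swap23 p).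
Proof.
move=> [d [T [P [A [Q [hA [hQ [mA [mQ hp]]]]]]]]].
exists d, T, P, A, (fun l => swapq (Q l)).
split; first exact: hA.
split; first by move=> l; split; [exact: cond2_swapq (hQ l).1 | exact: type_2from3_swapq (hQ l).2].
split; first exact: mA.
split; first by move=> o2 o3 i2 i3; exact: mQ.
by move=> o1 o2 o3 i1 i2 i3; exact: hp.
Qed.

End Swap.

Theorem mainTheorem2 (R : realType) :
  (* TOBL is a proper subset of ATOBL_{2<-3} *)
  ((forall p : corr R, TOBL p -> ATOBL_2from3 p) /\
   (exists p : corr R, ATOBL_2from3 p /\ ~ TOBL p)) /\
  (* TOBL is a proper subset of ATOBL_{2->3} *)
  ((forall p : corr R, TOBL p -> ATOBL_2to3 p) /\
   (exists p : corr R, ATOBL_2to3 p /\ ~ TOBL p)) /\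
  (* more specifically *)
  (ATOBL_2from3 (@PG R) /\ ~ ATOBL_2to3 (@PG R)) /\
  (ATOBL_2to3 (@PGtilde R) /\ ~ ATOBL_2from3 (@PGtilde R)).
Proof.
have PG_in := @PG_in_ATOBL_2from3 R.
have PG_out := @PG_notin_ATOBL_2to3 R.
(* P̃^G is swap23 P^G, and swap23 is an involution. *)
have PGt_in : ATOBL_2to3 (@PGtilde R) := ATOBL_2from3_swap PG_in.
have PGt_out : ~ ATOBL_2from3 (@PGtilde R).
  by move=> h; apply: PG_out; exact: (ATOBL_2from3_swap h).
split; [split|split; [split|split]] => //.
- by move=> p [].
- by exists (@PG R); split=> // -[_].
- by move=> p [].
- by exists (@PGtilde R); split=> // -[].
Qed.
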